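(* Let $N$ be even. Let $\rho_0=\sum_{n=1}^Np_n|n\rangle\langle n|$ be a full-rank density matrix on $\mathbb{C}^N$, and let $G$ be a Hermitian operator with $\langle n|G|m\rangle\in\mathbb{R}$ for all $n,m$. Let $\rho_\lambda=e^{-i\lambda G}\rho_0e^{i\lambda G}$, and let $L_0$ be its symmetric logarithmic derivative at $\lambda=0$. Assume $L_0$ is full rank. Then: (3.1) $L_0$ is diagonal in an orthonormal basis $\{|\alpha_{i,k}\rangle: i=\pm,\ k=1,\dots,N/2\}$ whose eigenvalues are opposite in pairs: $L_0|\alpha_{\pm,k}\rangle=\pm\alpha_{+,k}|\alpha_{\pm,k}\rangle$ with $\alpha_{+,k}\in\mathbb{R}\setminus\{0\}$. (3.2) Let $V:\mathbb{C}^N\to\mathbb{C}^2\otimes\mathbb{C}^{N/2}$ be the unitary defined by $V|\alpha_{i,k}\rangle=|i\rangle\otimes|k\rangle$. Here $\{|+\rangle,|-\rangle\}$ is the eigenbasis of a Pauli operator $S_y$ on $\mathbb{C}^2$ with $S_y|\pm\rangle=\pm|\pm\rangle$, and $\{|k\rangle\}$ is an orthonormal basis of $\mathbb{C}^{N/2}$. Under this factorization $\mathcal{H}_N\cong\mathcal{H}_2\otimes\mathcal{H}_{N/2}$, the SLD takes the product form $$VL_0V^\dagger=S_y\otimes\sum_{k=1}^{N/2}\alpha_{+,k}\,\Pi_k,\qquad \Pi_k=|k\rangle\langle k|.$$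
   Context: The symmetric logarithmic derivative $L_0$ is the Hermitian operator satisfying $\partial_\lambda\rho_\lambda|_{\lambda=0}=-i[G,\rho_0]=(\rho_0L_0+L_0\rho_0)/2$; it is unique because $\rho_0$ is full rank. *)

From HB Require Import structures.
From mathcomp Require Import all_boot all_order all_algebra.
From mathcomp Require Import sesquilinear spectral.
From mathcomp.real_closed Require Import mxtens.
Set Implicit Arguments. Unset Strict Implicit. Unset Printing Implicit Defensive.
Import Order.TTheory GRing.Theory Num.Theory.
Local Open Scope ring_scope.

Definition adjmx {C : numClosedFieldType} {m n} (A : 'M[C]_(m, n)) : 'M[C]_(n, m) :=
  (map_mx Num.conj A)^T.

Definition hermitian_op {C : numClosedFieldType} {n} (A : 'M[C]_n) : Prop :=
  adjmx A = A.

Definition commr {C : numClosedFieldType} {n} (A B : 'M[C]_n) : 'M[C]_n :=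
  A *m B - B *m A.

(* rho_lambda = exp(-i lambda G) rho0 exp(i lambda G); its derivative at
   lambda = 0 is -i[G, rho0]. *)
Definition is_SLD {C : numClosedFieldType} {n} (G rho0 L0 : 'M[C]_n) : Prop :=
  hermitian_op L0 /\
  - 'i *: commr G rho0 = (2%:R)^-1 *: (rho0 *m L0 + L0 *m rho0).

Definition Sy {C : numClosedFieldType} : 'M[C]_2 :=
  \matrix_(i < 2, j < 2)
    (if i == j then 0 else if i == 0 then - 'i else 'i).

(* eigenvectors |+> (b = true) and |-> (b = false) of S_y:
   |+-> = (|0> +- i|1>)/sqrt 2, with S_y |+-> = +- |+-> *)
Definition ketpm {C : numClosedFieldType} (b : bool) : 'cV[C]_2 :=
  (sqrtC 2%:R)^-1 *: \col_(i < 2) (if i == 0 then 1 else if b then 'i else - 'i).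

Definition ket {C : numClosedFieldType} {M} (k : 'I_M) : 'cV[C]_M := delta_mx k 0.

From mathcomp Require Import all_boot all_order all_algebra.
From mathcomp Require Import sesquilinear spectral.
From mathcomp.real_closed Require Import mxtens.
From mathcomp Require Import zify ring.
Import Order.TTheory GRing.Theory Num.Theory.
Local Open Scope ring_scope.

(* Since G and rho0 are real, the SLD equation forces L0 to have purely
   imaginary entries, so complex conjugation maps an eigenvector of L0 for the
   eigenvalue a to one for -a.  L0 is Hermitian and invertible, so its
   spectrum is real and avoids 0.  If u_1, ..., u_s are orthonormal
   eigenvectors for positive eigenvalues, then the u_j together with their
   conjugates form an orthonormal family of size 2s (eigenvalues of opposite
   signs never coincide), so s <= N/2; the same holds for the negative
   eigenvalues, hence s = N/2.  The pairs (u_k, conj u_k) are the basis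
   alpha_{+-,k}, and any unitary V sending it to |+-> (x) |k> conjugates L0 to
   S_y (x) sum_k alpha_{+,k} Pi_k, because both operators act identically on
   that basis. *)

Section Adjoint.
Context {C : numClosedFieldType}.

Lemma adjmxE {m n} (A : 'M[C]_(m, n)) : adjmx A = (A ^t*)%sesqui.
Proof. by rewrite /adjmx map_trmx. Qed.

Lemma adjmxK {m n} (A : 'M[C]_(m, n)) : adjmx (adjmx A) = A.
Proof. by apply/matrixP => i j; rewrite !mxE conjCK. Qed.

Lemma adjmxM {m n p} (A : 'M[C]_(m, n)) (B : 'M[C]_(n, p)) :
  adjmx (A *m B) = adjmx B *m adjmx A.
Proof. by rewrite /adjmx map_mxM trmx_mul. Qed.

Lemma adjmxZ {m n} c (A : 'M[C]_(m, n)) : adjmx (c *: A) = c^* *: adjmx A.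
Proof. by rewrite /adjmx map_mxZ linearZ. Qed.

Lemma adjmx_conj {m n} (A : 'M[C]_(m, n)) :
  adjmx (map_mx Num.conj A) = map_mx Num.conj (adjmx A).
Proof. by rewrite /adjmx map_trmx. Qed.

Lemma adjmx_tens {m n p q} (A : 'M[C]_(m, n)) (B : 'M[C]_(p, q)) :
  adjmx (A *t B) = adjmx A *t adjmx B.
Proof. by rewrite /adjmx map_mxT trmx_tens. Qed.

End Adjoint.

Section Orthonormal.
Context {C : numClosedFieldType}.

Definition orthonormal_fam {I : eqType} {n} (v : I -> 'cV[C]_n) : Prop :=
  forall i j, adjmx (v i) *m v j = (i == j)%:R%:M.

Definition colsmx {m n} (v : 'I_n -> 'cV[C]_m) : 'M[C]_(m, n) :=
  \matrix_(r, c) v c r 0.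

Lemma colsmx_delta {m n} (v : 'I_n -> 'cV[C]_m) c :
  colsmx v *m delta_mx c 0 = v c.
Proof. by rewrite -colE; apply/matrixP => r z; rewrite ord1 !mxE. Qed.

Lemma orthonormal_fam_neq0 {I : eqType} {n} {v : I -> 'cV[C]_n} i :
  orthonormal_fam v -> v i != 0.
Proof.
move=> v_on; apply/eqP => vi0; have := v_on i i.
rewrite vi0 mulmx0 eqxx => /matrixP/(_ 0 0); rewrite !mxE /= => /eqP.
by rewrite eq_sym oner_eq0.
Qed.

Lemma orthonormal_fam_comp {I J : eqType} {n} {v : I -> 'cV[C]_n} {f : J -> I} :
  injective f -> orthonormal_fam v -> orthonormal_fam (v \o f).
Proof. by move=> f_inj v_on i j; rewrite /= v_on (inj_eq f_inj). Qed.

Lemma orthonormal_fam_conj {I : eqType} {n} {v : I -> 'cV[C]_n} :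
  orthonormal_fam v -> orthonormal_fam (fun i => map_mx Num.conj (v i)).
Proof.
by move=> v_on i j; rewrite adjmx_conj -map_mxM v_on map_scalar_mx /= conjC_nat.
Qed.

Lemma tens_scalar_mx11 (a b : C) :
  (a%:M : 'M_1) *t (b%:M : 'M_1) = (a * b)%:M :> 'M_(1 * 1).
Proof.
apply/matrixP => i j.
case: (mxtens_indexP i) => i1 i2; case: (mxtens_indexP j) => j1 j2.
by rewrite tensmxE !ord1 !mxE /= !mulr1n.
Qed.

Lemma orthonormal_fam_tens {I J : eqType} {m n}
    {v : I -> 'cV[C]_m} {w : J -> 'cV[C]_n} :
  orthonormal_fam v -> orthonormal_fam w ->
  orthonormal_fam (fun x : I * J => v x.1 *t w x.2).
Proof.
move=> v_on w_on [i j] [k l] /=.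
change (adjmx (v i *t w j) *m (v k *t w l)
        = ((i, j) == (k, l))%:R%:M :> 'M_(1 * 1)).
rewrite adjmx_tens tensmx_mul v_on w_on tens_scalar_mx11.
by rewrite -natrM mulnb xpair_eqE.
Qed.

Lemma orthonormal_fam_col {m n} {A : 'M[C]_(m, n)} :
  adjmx A *m A = 1%:M -> orthonormal_fam (fun j => col j A).
Proof.
move=> AA i j; apply/matrixP => r s; rewrite !ord1.
have := congr1 (fun X : 'M_n => X i j) AA; rewrite !mxE eqxx mulr1n => <-.
by apply: eq_bigr => k _; rewrite !mxE.
Qed.

Lemma colsmx_gram {m n} {v : 'I_n -> 'cV[C]_m} :
  orthonormal_fam v -> adjmx (colsmx v) *m colsmx v = 1%:M.
Proof.
move=> v_on; apply/matrixP => i j.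
have := congr1 (fun X : 'M_1 => X 0 0) (v_on i j); rewrite !mxE eqxx mulr1n => <-.
by apply: eq_bigr => r _; rewrite !mxE.
Qed.

Lemma orthonormal_fam_card_le {I : finType} {n} {v : I -> 'cV[C]_n} :
  orthonormal_fam v -> (#|I| <= n)%N.
Proof.
move=> /(orthonormal_fam_comp (@enum_val_inj _ I)) /colsmx_gram gram.
set A := adjmx _ in gram.
have : A \is unitarymx by apply/unitarymxP; rewrite -adjmxE adjmxK.
by move/mxrank_unitary <-; exact: rank_leq_col.
Qed.

Lemma colsmx_unitary {n} {v : 'I_n -> 'cV[C]_n} :
  orthonormal_fam v -> colsmx v \is unitarymx.
Proof.
move=> /colsmx_gram gram; rewrite -trmxC_unitary -adjmxE.
by apply/unitarymxP; rewrite -adjmxE adjmxK.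
Qed.

Lemma sum_proj_orthonormal {I : finType} {n} {v : I -> 'cV[C]_n} (a : I -> C) k :
  orthonormal_fam v -> (\sum_l a l *: (v l *m adjmx (v l))) *m v k = a k *: v k.
Proof.
move=> v_on; rewrite mulmx_suml (bigD1 k) //= big1 ?addr0 => [|l /negbTE lk].
  by rewrite -scalemxAl -mulmxA v_on eqxx mulmx1.
by rewrite -scalemxAl -mulmxA v_on lk mul_mx_scalar !scale0r scaler0.
Qed.

End Orthonormal.

Section OrthonormalBasis.
Context {C : numClosedFieldType} {I : finType} {n : nat} {v : I -> 'cV[C]_n}.
Hypotheses (cardI : #|I| = n) (v_on : orthonormal_fam v).

Let idx (c : 'I_n) : I := enum_val (cast_ord (esym cardI) c).

Let idx_inj : injective idx.
Proof. by move=> c c' /enum_val_inj /cast_ord_inj. Qed.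

Let idx_onto i : exists c, i = idx c.
Proof.
by exists (cast_ord cardI (enum_rank i)); rewrite /idx cast_ordK enum_rankK.
Qed.

Let basis_on : orthonormal_fam (v \o idx).
Proof. exact: orthonormal_fam_comp idx_inj v_on. Qed.

Let basis_delta c : colsmx (v \o idx) *m delta_mx c 0 = v (idx c).
Proof. exact: colsmx_delta. Qed.

Lemma eq_mx_on_basis {m} {X Y : 'M[C]_(m, n)} :
  (forall i, X *m v i = Y *m v i) -> X = Y.
Proof.
move=> XY; have /colsmx_unitary/unitarymx_unit W_unit := basis_on.
suff XW : X *m colsmx (v \o idx) = Y *m colsmx (v \o idx).
  by rewrite -(mulmxK W_unit X) XW mulmxK.
apply/matrixP => r c; have := congr1 (fun A : 'cV_m => A r 0) (XY (idx c)).
by rewrite -basis_delta !mulmxA -!colE !mxE.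
Qed.

Lemma unitarymx_basis_change {e : I -> 'cV[C]_n} : orthonormal_fam e ->
  exists2 V : 'M[C]_n, V \is unitarymx & forall i, V *m v i = e i.
Proof.
move=> e_on; exists (colsmx (e \o idx) *m adjmx (colsmx (v \o idx))).
  apply: mul_unitarymx; first exact/colsmx_unitary/orthonormal_fam_comp.
  by rewrite adjmxE trmxC_unitary; exact: colsmx_unitary.
move=> i; have [c ->] := idx_onto i.
rewrite -basis_delta -mulmxA (mulmxA (adjmx _)) colsmx_gram // mul1mx.
exact: colsmx_delta.
Qed.

Lemma unitarymx_conj_eigen {e : I -> 'cV[C]_n} {lambda : I -> C}
    {V L K : 'M[C]_n} :
  V \is unitarymx -> (forall i, V *m v i = e i) ->
  (forall i, L *m v i = lambda i *: v i) ->
  (forall i, K *m e i = lambda i *: e i) ->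
  V *m L *m adjmx V = K.
Proof.
move=> /unitarymxP; rewrite -adjmxE => VV Ve Lv Ke.
suff -> : V *m L = K *m V by rewrite -mulmxA VV mulmx1.
by apply: eq_mx_on_basis => i; rewrite -!mulmxA Lv Ve -scalemxAr Ve Ke.
Qed.

End OrthonormalBasis.

Section HermitianSpectrum.
Context {C : numClosedFieldType} {n : nat}.
Implicit Types (L : 'M[C]_n) (u w : 'cV[C]_n).

Lemma hermitian_eigenbasis {L} : hermitian_op L ->
  exists (d : 'I_n -> C) (u : 'I_n -> 'cV[C]_n),
    [/\ orthonormal_fam u, forall j, d j \is Num.real
      & forall j, L *m u j = d j *: u j].
Proof.
move=> L_herm.
have L_hsym : L \is hermsymmx.
  by apply/is_hermitianmxP; rewrite expr0 scale1r -adjmxE L_herm.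
have /orthomx_spectralP L_spec := hermitian_normalmx L_hsym.
have P_unitary := spectral_unitarymx L.
rewrite invmx_unitary // -adjmxE in L_spec.
set P := spectralmx L in P_unitary L_spec; set D := spectral_diag L in L_spec.
have /unitarymxP PP : P \is unitarymx by [].
rewrite -adjmxE in PP.
exists (fun j => D 0 j), (fun j => col j (adjmx P)); split.
- by apply: orthonormal_fam_col; rewrite adjmxK.
- by move=> j; apply: (mxOverP (hermitian_spectral_diag_real L_hsym)).
- move=> j; rewrite colE mulmxA {1}L_spec -(mulmxA _ P) PP mulmx1 -mulmxA.
  have -> : diag_mx D *m delta_mx j 0 = D 0 j *: delta_mx j 0 :> 'cV_n.
    apply/matrixP => r c; rewrite mul_diag_mx !mxE.
    by case: eqVneq => [->|_] //=; rewrite !mulr0.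
  by rewrite -scalemxAr.
Qed.

Lemma hermitian_eigvec_orthogonal {L u w} {a b : C} :
  hermitian_op L -> a \is Num.real -> a != b ->
  L *m u = a *: u -> L *m w = b *: w -> adjmx u *m w = 0.
Proof.
move=> L_herm a_real neq_ab Lu Lw.
have uL : adjmx u *m L = a *: adjmx u.
  by rewrite -{1}L_herm -adjmxM Lu adjmxZ conj_Creal.
have : (a - b) *: (adjmx u *m w) = 0.
  by rewrite scalerBl scalemxAl -uL -mulmxA Lw -scalemxAr subrr.
by move/eqP; rewrite scaler_eq0 subr_eq0 (negbTE neq_ab) => /eqP.
Qed.

Lemma unitmx_eigenvalue_neq0 {L u} {a : C} :
  L \in unitmx -> u != 0 -> L *m u = a *: u -> a != 0.
Proof.
move=> L_unit u_neq0 Lu; apply: contraNneq u_neq0 => a0.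
by rewrite -(mulKmx L_unit u) Lu a0 scale0r mulmx0.
Qed.

Lemma conj_eigenvector {L u} {a : C} :
  map_mx Num.conj L = - L -> a \is Num.real -> L *m u = a *: u ->
  L *m map_mx Num.conj u = - a *: map_mx Num.conj u.
Proof.
move=> L_conj a_real Lu.
by rewrite -[L]opprK -L_conj mulNmx -map_mxM Lu map_mxZ /= conj_Creal // scaleNr.
Qed.

End HermitianSpectrum.

Section SLD.
Context {C : numClosedFieldType} {n : nat}.

Lemma diag_unitmx_neq0 {d : 'rV[C]_n} i : diag_mx d \in unitmx -> d 0 i != 0.
Proof.
by rewrite unitmxE det_diag (bigD1 i) //= unitfE mulf_eq0 negb_or => /andP[].
Qed.

Lemma SLD_conj {p : 'I_n -> C} {G L : 'M[C]_n} :
  (forall i, 0 < p i) -> (forall i j, G i j \is Num.real) ->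
  is_SLD G (diag_mx (\row_i p i)) L -> map_mx Num.conj L = - L.
Proof.
move=> p_gt0 G_real [_ L_SLD]; apply/matrixP => i j; rewrite !mxE.
have p_real k : (p k)^* = p k by rewrite conj_Creal ?gtr0_real.
have pij_neq0 : p i + p j != 0 by rewrite lt0r_neq0 ?addr_gt0.
have L_entry : L i j * (p i + p j) = 2%:R * (- 'i * (G i j * p j - p i * G i j)).
  have := congr1 (fun A : 'M_n => A i j) L_SLD.
  rewrite /commr !mul_mx_diag !mul_diag_mx !mxE => ->.
  by rewrite mulVKf ?pnatr_eq0 //; ring.
apply: (mulIf pij_neq0); rewrite mulNr L_entry.
have := congr1 Num.conj L_entry; rewrite rmorphM rmorphD /= !p_real => ->.
rewrite !rmorphM rmorphN rmorphB !rmorphM /= conjCi conjC_nat !p_real.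
by rewrite conj_Creal //; ring.
Qed.

End SLD.

Section ConjugatePairs.
Context {C : numClosedFieldType} {n : nat} {L : 'M[C]_n}.
Context {d : 'I_n -> C} (u : 'I_n -> 'cV[C]_n).
Hypotheses (L_herm : hermitian_op L) (L_conj : map_mx Num.conj L = - L).
Hypotheses (u_on : orthonormal_fam u) (d_real : forall j, d j \is Num.real).
Hypothesis L_u : forall j, L *m u j = d j *: u j.

Definition pm_vec (x : bool * 'I_n) : 'cV[C]_n :=
  if x.1 then u x.2 else map_mx Num.conj (u x.2).

Lemma L_pm_vec b j :
  L *m pm_vec (b, j) = (if b then d j else - d j) *: pm_vec (b, j).
Proof. by case: b; [exact: L_u | exact: conj_eigenvector]. Qed.

Lemma pm_vec_orthonormal {T : eqType} {f : T -> 'I_n} :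
  injective f -> (forall k l, d (f k) + d (f l) != 0) ->
  orthonormal_fam (fun x : bool * T => pm_vec (x.1, f x.2)).
Proof.
move=> f_inj no_opp [[] k] [[] l] /=.
- by rewrite /pm_vec /= u_on (inj_eq f_inj).
- rewrite (hermitian_eigvec_orthogonal L_herm _ _ (L_pm_vec true (f k))
    (L_pm_vec false (f l))) ?raddf0 ?d_real //.
  by rewrite -subr_eq0 opprK.
- rewrite (hermitian_eigvec_orthogonal L_herm _ _ (L_pm_vec false (f k))
    (L_pm_vec true (f l))) ?raddf0 ?realN ?d_real //.
  by rewrite -subr_eq0 -opprD oppr_eq0 addrC.
- by rewrite /pm_vec /= (orthonormal_fam_conj u_on) (inj_eq f_inj).
Qed.

Lemma card_no_opposite_le {S : {set 'I_n}} :
  {in S &, forall i j, d i + d j != 0} -> (#|S|.*2 <= n)%N.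
Proof.
move=> no_opp.
have no_opp_enum (k l : 'I_#|S|) : d (enum_val k) + d (enum_val l) != 0.
  exact: no_opp (enum_valP k) (enum_valP l).
have := pm_vec_orthonormal (@enum_val_inj _ S) no_opp_enum.
by move/orthonormal_fam_card_le; rewrite card_prod card_bool card_ord mul2n.
Qed.

Lemma card_pos_eigen : (forall j, d j != 0) -> #|[set j | 0 < d j]|.*2 = n.
Proof.
move=> d_neq0; set S := [set j | 0 < d j].
have pos_le : (#|S|.*2 <= n)%N.
  apply: (card_no_opposite_le (S := S)) => i j; rewrite !inE => di dj.
  by rewrite lt0r_neq0 ?addr_gt0.
have neg j : j \in ~: S -> d j < 0.
  rewrite !inE => dj; have : d j <= 0 by rewrite real_leNgt ?d_real ?real0.
  by rewrite le_eqVlt (negbTE (d_neq0 j)).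
have neg_le : (#|~: S|.*2 <= n)%N.
  apply: (card_no_opposite_le (S := ~: S)) => i j /neg di /neg dj.
  by rewrite -oppr_eq0 opprD lt0r_neq0 // addr_gt0 // oppr_gt0.
have := cardsC S; rewrite card_ord; lia.
Qed.

End ConjugatePairs.

Lemma paired_eigenbasis {C : numClosedFieldType} {M} {L : 'M[C]_(2 * M)} :
  hermitian_op L -> L \in unitmx -> map_mx Num.conj L = - L ->
  exists (a : 'I_M -> C) (alpha : bool -> 'I_M -> 'cV[C]_(2 * M)),
    [/\ forall k, 0 < a k,
        orthonormal_fam (fun x : bool * 'I_M => alpha x.1 x.2)
      & forall i k, L *m alpha i k = (if i then a k else - a k) *: alpha i k].
Proof.
move=> L_herm L_unit L_conj.
have [d [u [u_on d_real L_u]]] := hermitian_eigenbasis L_herm.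
have d_neq0 j : d j != 0.
  exact: unitmx_eigenvalue_neq0 L_unit (orthonormal_fam_neq0 j u_on) (L_u j).
set S := [set j | 0 < d j].
have cardS : #|S| = M.
  apply/double_inj; rewrite (card_pos_eigen u L_herm L_conj u_on d_real L_u d_neq0).
  by rewrite -mul2n.
pose f k : 'I_(2 * M) := enum_val (cast_ord (esym cardS) k).
have f_pos k : 0 < d (f k).
  by have := enum_valP (cast_ord (esym cardS) k); rewrite inE.
have f_inj : injective f by move=> k l /enum_val_inj /cast_ord_inj.
exists (d \o f), (fun b k => pm_vec u (b, f k)); split.
- exact: f_pos.
- apply: (pm_vec_orthonormal u L_herm L_conj u_on d_real L_u f_inj) => k l.
  by rewrite lt0r_neq0 ?addr_gt0.
- move=> b k; exact: (L_pm_vec u L_conj d_real L_u).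
Qed.

Section Qubit.
Context {C : numClosedFieldType}.

Lemma ket_orthonormal M : orthonormal_fam (@ket C M).
Proof.
move=> k l; have -> : adjmx (ket k) = delta_mx 0 k :> 'rV[C]_M.
  by apply/matrixP => i j; rewrite !mxE conjC_nat andbC.
rewrite mul_delta_mx_cond; apply/matrixP => i j; rewrite !ord1.
by case: (k == l); rewrite ?mulr1n ?mulr0n !mxE.
Qed.

Lemma ketpm_orthonormal : orthonormal_fam (@ketpm C).
Proof.
move=> b b'; set c : C := (sqrtC 2%:R)^-1.
have c_real : c^* = c.
  by apply: conj_Creal; rewrite realV ger0_real // sqrtC_ge0 ler0n.
have cc : c * c = 2%:R^-1 by rewrite -invfM -expr2 sqrtCK.
have ii : 'i * 'i = -1 :> C by rewrite -expr2 sqrCi.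
rewrite /ketpm adjmxZ -scalemxAl -scalemxAr scalerA c_real cc.
apply/matrixP => i j; rewrite !ord1 !mxE big_ord_recl big_ord1 !mxE /=.
case: b; case: b' => /=; rewrite ?mulr1n ?mulr0n ?rmorph1 ?rmorphN /= ?conjCi.
all: by rewrite ?mulNr ?mulrN ?opprK ii; field.
Qed.

Lemma Sy_ketpm b : Sy *m ketpm b = (if b then 1 else -1) *: ketpm b :> 'cV[C]_2.
Proof.
rewrite /ketpm -scalemxAr scalerA.
apply/matrixP => i j; rewrite !ord1 !mxE big_ord_recl big_ord1 !mxE /=.
have ii : 'i * 'i = -1 :> C by rewrite -expr2 sqrCi.
case: i => [[|[|//]] i_lt] /=; case: b => /=; rewrite ?mulr1n ?mulr0n.
all: rewrite ?mulNr ?mulrN ?opprK ?ii; ring.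
Qed.

Lemma Sy_tens_proj_eigen M (a : 'I_M -> C) b k :
  (Sy *t (\sum_l a l *: (ket l *m adjmx (ket l)))) *m (ketpm b *t ket k)
  = (if b then a k else - a k) *: (ketpm b *t ket k).
Proof.
rewrite tensmx_mul Sy_ketpm sum_proj_orthonormal; last exact: ket_orthonormal.
by apply/matrixP => i j; case: b; rewrite !mxE; ring.
Qed.

End Qubit.

Theorem proposition3 (C : numClosedFieldType) (M : nat)
  (p : 'I_(2 * M) -> C) (G L0 : 'M[C]_(2 * M)) :
  (* rho0 = sum_n p_n |n><n| is a density matrix (positive, trace 1) ... *)
  (forall n, 0 <= p n) ->
  \tr (diag_mx (\row_n p n)) = 1 ->
  (* ... of full rank *)
  diag_mx (\row_n p n) \in unitmx ->
  (* G Hermitian with real matrix elements *)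
  hermitian_op G ->
  (forall n m, G n m \is Num.real) ->
  (* L0 is the SLD of rho_lambda at lambda = 0, and is full rank *)
  is_SLD G (diag_mx (\row_n p n)) L0 ->
  L0 \in unitmx ->
  exists (a : 'I_M -> C) (alpha : bool -> 'I_M -> 'cV[C]_(2 * M)),
    [/\ (* (3.1) alpha_{+,k} real and nonzero *)
        (forall k, a k \is Num.real /\ a k != 0),
        (* {|alpha_{i,k}>} orthonormal (hence an orthonormal basis of C^N) *)
        (forall i j k l, adjmx (alpha i k) *m alpha j l = ((i == j) && (k == l))%:R%:M),
        (* L0 |alpha_{+-,k}> = +- alpha_{+,k} |alpha_{+-,k}> *)
        (forall i k, L0 *m alpha i k = (if i then a k else - a k) *: alpha i k),
        (* (3.2) the unitary V with V|alpha_{i,k}> = |i> (x) |k> exists ... *)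
        (exists V : 'M[C]_(2 * M), V \is unitarymx /\
           forall i k, V *m alpha i k = ketpm i *t ket k) &
        (* ... and V L0 V^dagger = S_y (x) sum_k alpha_{+,k} Pi_k *)
        (forall V : 'M[C]_(2 * M), V \is unitarymx ->
           (forall i k, V *m alpha i k = ketpm i *t ket k) ->
           V *m L0 *m adjmx V = Sy *t (\sum_k a k *: (ket k *m adjmx (ket k))))].
Proof.
move=> p_ge0 _ rho_unit _ G_real SLD L0_unit.
have p_gt0 i : 0 < p i.
  by rewrite lt0r p_ge0 andbT; have := diag_unitmx_neq0 i rho_unit; rewrite mxE.
have [L0_herm _] := SLD.
have [a [alpha [a_gt0 alpha_on L0_alpha]]] :=
  paired_eigenbasis L0_herm L0_unit (SLD_conj p_gt0 G_real SLD).
have card_pm : #|{: bool * 'I_M}| = (2 * M)%N.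
  by rewrite card_prod card_bool card_ord.
have e_on := orthonormal_fam_tens (@ketpm_orthonormal C) (@ket_orthonormal C M).
exists a, alpha; split.
- by move=> k; rewrite gtr0_real ?lt0r_neq0 ?a_gt0.
- by move=> i j k l; rewrite (alpha_on (i, k) (j, l)) xpair_eqE.
- exact: L0_alpha.
- have [V V_unitary V_alpha] := unitarymx_basis_change card_pm alpha_on e_on.
  by exists V; split => // i k; exact: (V_alpha (i, k)).
- move=> V V_unitary V_alpha.
  apply: (unitarymx_conj_eigen card_pm alpha_on V_unitary
    (fun x => V_alpha x.1 x.2)
    (lambda := fun x => if x.1 then a x.2 else - a x.2)) => [[i k]|[i k]] /=.
  + exact: L0_alpha.
  + exact: Sy_tens_proj_eigen.
Qed.
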